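(* Assume (A1) and (A2). Then for any $n\geq 1$ there exists $C(n)<+\infty$ such that for any $N\geq 1$ and $j\in\{1,2\}$, $$ \mathbb{E}\big[(\gamma_{n,j}^N(1) - \gamma_{n,j}(1))^2\big] \leq \frac{C(n)}{N}. $$
   Context: Notation: $\mathcal U=\mathbb R^d$, $\mathcal V=\mathcal U\times\mathcal U$, $v=(u_1,u_2)$. For a probability $\mu$ on $\mathcal V$, $\mu_j$ is its $j$-th marginal, $\mu(\varphi_j)=\int\varphi(u_j)\mu(dv)$. Coupled particle system. Given: potentials $G_p:\mathcal U\to(0,\infty)$, $p\ge0$; a probability $\eta_0$ on $\mathcal V$; Markov kernels $M_n$ from $\mathcal V$ to $\mathcal V$, $n\ge1$, with Markov kernels $M_{n,j}$ on $\mathcal U$ ($j=1,2$) satisfying $\int\varphi(u'_j)M_n(v,dv')=\int\varphi(u_j')M_{n,j}(u_j,du_j')$ for all bounded measurable $\varphi$. Define $\gamma_{n,j}(\varphi)=\int \varphi(u_n)\prod_{p=0}^{n-1}G_p(u_p)\,\eta_{0,j}(du_0)\prod_{p=1}^nM_{p,j}(u_{p-1},du_p)$. For a probability $\mu$ on $\mathcal V$ let $G_{n,j,\mu}(u)=G_n(u)/\mu_j(G_n)$, $\bar G_{n,\mu}(v)=G_{n,1,\mu}(u_1)\wedge G_{n,2,\mu}(u_2)$ and $$\bar\Phi_n(\mu)(dv')=\mu\big(\bar G_{n-1,\mu}M_n(\cdot,dv')\big)+\big(1-\mu(\bar G_{n-1,\mu})\big)\int\!\!\int \frac{(G_{n-1,1,\mu}-\bar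 G_{n-1,\mu})(v)}{\mu(G_{n-1,1,\mu}-\bar G_{n-1,\mu})}\frac{(G_{n-1,2,\mu}-\bar G_{n-1,\mu})(\tilde v)}{\mu(G_{n-1,2,\mu}-\bar G_{n-1,\mu})}M_n((u_1,\tilde u_2),dv')\mu(dv)\mu(d\tilde v)$$ (second term absent if $\mu(\bar G_{n-1,\mu})=1$). With $N$ particles: $v_0^i\stackrel{iid}{\sim}\eta_0$, and for $p\ge1$ conditionally independently $v_p^i\sim\bar\Phi_p(\bar\eta^N_{p-1})$, where $\bar\eta^N_p=\frac1N\sum_{i=1}^N\delta_{v_p^i}$ has $j$-th marginal $\eta^N_{p,j}$. Set $\gamma^N_{n,j}(1)=\prod_{p=0}^{n-1}\eta^N_{p,j}(G_p)$; $\mathbb E$ is expectation w.r.t. this particle system. (A1): there exist $c>1$, $C>0$ such that for all $n\ge0$, $x,x'$: $c^{-1}<G_n(x)<c$ and $|G_n(x)-G_n(x')|\le C|x-x'|$. (A2): for each $n$ there is $C_n>0$ such that for all $u,u'$, $j\in\{1,2\}$ and bounded Lipschitz $\varphi$, $|M_{n,j}(\varphi)(u)-M_{n,j}(\varphi)(u')|\le C_n\sup|\varphi|\,|u-u'|$. *)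

From HB Require Import structures.
From mathcomp Require Import all_boot all_order all_algebra.
From mathcomp Require Import all_classical all_reals all_analysis.
Set Implicit Arguments. Unset Strict Implicit. Unset Printing Implicit Defensive.
Import Order.TTheory GRing.Theory Num.Theory.
Local Open Scope ring_scope.
Local Open Scope classical_set_scope.

(* The state space U = R^d, as d-tuples of reals with the product (= Borel)
   sigma-algebra; V = U * U with the product sigma-algebra. *)
Definition Ud (R : realType) (d : nat) := (d.-tuple R).
Definition Vd (R : realType) (d : nat) := (d.-tuple R * d.-tuple R)%type.

Definition dist (R : realType) (d : nat) (x y : d.-tuple R) : R :=
  Num.sqrt (\sum_(i < d) (tnth x i - tnth y i) ^+ 2).

Definition compj (R : realType) (d : nat) (j : nat) (v : Vd R d) : d.-tuple R :=
  if j == 1%N then v.1 else v.2.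

Definition emp (R : realType) (d : nat) (N : nat) (x : nat -> Vd R d)
  : {measure set Vd R d -> \bar R} :=
  mscale (N%:R^-1)%:nng (msum (fun k => \d_(x k)) N).


Local Open Scope ereal_scope.

Definition muR (R : realType) (d : nat) (mu : {measure set Vd R d -> \bar R})
  (f : Vd R d -> R) : R := fine (\int[mu]_v (f v)%:E).

Definition Gj (R : realType) (d : nat) (G : nat -> d.-tuple R -> R) (n j : nat)
  (mu : {measure set Vd R d -> \bar R}) (u : d.-tuple R) : R :=
  (G n u / muR mu (fun v => G n (compj j v)))%R.

Definition Gbar (R : realType) (d : nat) (G : nat -> d.-tuple R -> R) (n : nat)
  (mu : {measure set Vd R d -> \bar R}) (v : Vd R d) : R :=
  Order.min (Gj G n 1 mu v.1) (Gj G n 2 mu v.2).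

(* PhiInt G M n mu F  =  \int F d(bar Phi_n(mu)), for nonnegative F,
   written out from the defining formula of bar Phi_n (n >= 1). *)
Definition PhiInt (R : realType) (d : nat) (G : nat -> d.-tuple R -> R)
  (M : nat -> R.-pker (Vd R d) ~> (Vd R d)) (n : nat)
  (mu : {measure set Vd R d -> \bar R}) (F : Vd R d -> \bar R) : \bar R :=
  let Gb := Gbar G n.-1 mu in
  let w1 := fun v : Vd R d => (Gj G n.-1 1 mu v.1 - Gb v)%R in
  let w2 := fun v : Vd R d => (Gj G n.-1 2 mu v.2 - Gb v)%R in
  \int[mu]_v ((Gb v)%:E * \int[M n v]_y F y)
  + (if muR mu Gb == 1%R then 0 else
     (1 - muR mu Gb)%:E *
       \int[mu]_v (\int[mu]_w
          (((w1 v / muR mu w1) * (w2 w / muR mu w2))%:E *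
            \int[M n (v.1, w.2)]_y F y))).

(* a default point of V (fills unused indices; never integrated against) *)
Definition ptV (R : realType) (d : nat) : Vd R d :=
  ([tuple (0:R)%R | _ < d], [tuple (0:R)%R | _ < d]).

Definition upd (T : Type) (x : nat -> T) (k : nat) (a : T) : nat -> T :=
  fun i => if i == k then a else x i.

(* intN Q k F x : integrate F over coordinates 0..k-1 of a configuration,
   each coordinate independently with law given by the integral Q
   (i.e. integration against the k-fold product of the law). *)
Fixpoint intN (R : realType) (T : Type) (Q : (T -> \bar R) -> \bar R) (k : nat)
  (F : (nat -> T) -> \bar R) (x : nat -> T) : \bar R :=
  match k with
  | 0 => F x
  | k'.+1 => Q (fun a => intN Q k' F (upd x k' a))
  end.

(* run the particle system from time p (history h : time -> particle -> V
   filled up to time p) for k more steps, then evaluate F on the history. *)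
Fixpoint run (R : realType) (d : nat) (G : nat -> d.-tuple R -> R)
  (M : nat -> R.-pker (Vd R d) ~> (Vd R d)) (N : nat) (k p : nat)
  (h : nat -> nat -> Vd R d) (F : (nat -> nat -> Vd R d) -> \bar R) : \bar R :=
  match k with
  | 0 => F h
  | k'.+1 =>
      intN (PhiInt G M p.+1 (emp N (h p))) N
        (fun x => run G M N k' p.+1 (upd h p.+1 x) F) (fun _ => ptV R d)
  end.

(* Expectation, w.r.t. the N-particle coupled system, of a nonnegative
   function F of the particle history at times 0..m. *)
Definition Epart (R : realType) (d : nat) (eta0 : probability (Vd R d) R)
  (G : nat -> d.-tuple R -> R) (M : nat -> R.-pker (Vd R d) ~> (Vd R d))
  (N m : nat) (F : (nat -> nat -> Vd R d) -> \bar R) : \bar R :=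
  intN (fun f => \int[eta0]_v f v) N
    (fun x0 => run G M N m 0 (fun _ => x0) F) (fun _ => ptV R d).

Definition gammaN (R : realType) (d : nat) (G : nat -> d.-tuple R -> R)
  (N n j : nat) (h : nat -> nat -> Vd R d) : R :=
  (\prod_(p < n) muR (emp N (h p)) (fun v => G p (compj j v)))%R.

(* fk k p u = \int prod_{q=p}^{p+k-1} G_q(u_q) prod M_{q+1,j}(u_q,du_{q+1}), u_p = u *)
Fixpoint fk (R : realType) (d : nat) (G : nat -> d.-tuple R -> R)
  (Mj : nat -> nat -> R.-pker (Ud R d) ~> (Ud R d)) (j : nat) (k p : nat)
  (u : d.-tuple R) : \bar R :=
  match k with
  | 0 => 1
  | k'.+1 => (G p u)%:E * \int[Mj j p.+1 u]_u' fk G Mj j k' p.+1 u'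
  end.

Definition gamma (R : realType) (d : nat) (eta0 : probability (Vd R d) R)
  (G : nat -> d.-tuple R -> R) (Mj : nat -> nat -> R.-pker (Ud R d) ~> (Ud R d))
  (n j : nat) : R :=
  fine (\int[eta0]_v fk G Mj j n 0 (compj j v)).

Definition supnorm (R : realType) (T : Type) (phi : T -> R) : R :=
  sup [set `|phi x|%R | x in [set: T]].

Definition lipschitz_fun (R : realType) (d : nat) (phi : d.-tuple R -> R) : Prop :=
  exists L : R, forall x y, (`|phi x - phi y| <= L * dist x y)%R.

From HB Require Import structures.
From mathcomp Require Import all_boot all_order all_algebra.
From mathcomp Require Import all_classical all_reals all_analysis.
From mathcomp Require Import measurable_realfun ring lra.
Set Implicit Arguments. Unset Strict Implicit. Unset Printing Implicit Defensive.
Import Order.TTheory GRing.Theory Num.Theory.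
Local Open Scope ring_scope.
Local Open Scope classical_set_scope.

(* Write gamma^N_p(f) := gamma^N_p(1) eta^N_p(f) for the j-th marginal and
   Q_q f := G_{q-1} M_{q,j} f.  The coupled update bar Phi_{p+1} has the
   Feynman-Kac update of eta^N_p as its j-th marginal, so given the particles at
   time p the j-th components at time p+1 are N independent draws from a law
   whose f-mean m satisfies gamma^N_{p+1}(1) m = gamma^N_p(Q_{p+1} f).  Hence the
   conditional expectation of (gamma^N_{p+1}(f) - gamma_{p+1}(f))^2 is
   (gamma^N_p(Q_{p+1} f) - gamma_p(Q_{p+1} f))^2 plus a variance term at most
   c^(2(p+1)) sup|f|^2 / N, where G <= c gives gamma^N_{p+1}(1) <= c^(p+1).
   Induction on p, applied to f = G_{n-1}, gives the bound. *)

Lemma variance_term_le (R : realFieldType) (lam a C e m B k : R) :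
  0 <= lam -> 0 <= a <= C -> e <= B ^+ 2 -> 0 <= k ->
  lam * a ^+ 2 * (e - m ^+ 2) * k <= lam * C ^+ 2 * B ^+ 2 * k.
Proof.
move=> lam0 /andP[a0 aC] eB k0; apply: ler_wpM2r => //; rewrite -!mulrA.
apply: ler_wpM2l => //.
have aC2 : a ^+ 2 <= C ^+ 2 by rewrite ler_pXn2r // ?nnegrE // (le_trans a0 aC).
have := sqr_ge0 m; have := sqr_ge0 a; have := sqr_ge0 B; nra.
Qed.

Section iterated_integral.
Variables (R : realType) (T : Type).
Implicit Types (Q : (T -> \bar R) -> \bar R) (g : T -> R) (x : nat -> T).

Definition tail_sum g (N k : nat) x : R := \sum_(k <= i < N) g (x i).

Lemma tail_sum_upd g N k x a : (k < N)%N ->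
  tail_sum g N k (upd x k a) = g a + tail_sum g N k.+1 x.
Proof.
move=> kN; rewrite /tail_sum big_ltn // /upd eqxx; congr (_ + _).
by apply: eq_big_nat => i /andP[ki _]; rewrite gtn_eqF.
Qed.

Lemma tail_sum_id g N x : tail_sum g N N x = 0.
Proof. by rewrite /tail_sum big_geq. Qed.

Definition quadratic_moments Q g (m e2 : R) := forall u0 u1 u2,
  Q (fun a => (u0 + u1 * g a + u2 * g a ^+ 2)%:E) = (u0 + u1 * m + u2 * e2)%:E.

(* Each of the integrated coordinates 0..k-1 contributes its mean to the sum
   and its variance to the square. *)
Lemma intN_quadratic Q g m e2 N : quadratic_moments Q g m e2 ->
  forall q0 q1 q2 k x, (k <= N)%N ->
  intN Q k (fun x => (q0 + q1 * tail_sum g N 0 x + q2 * tail_sum g N 0 x ^+ 2)%:E) x =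
  (q0 + q1 * (tail_sum g N k x + k%:R * m)
      + q2 * ((tail_sum g N k x + k%:R * m) ^+ 2 + k%:R * (e2 - m ^+ 2)))%:E.
Proof.
move=> hQ q0 q1 q2; elim=> [|k IH] x kN /=; first by rewrite !mul0r !addr0.
set S := tail_sum g N k.+1 x + k%:R * m.
transitivity (Q (fun a => (q0 + q1 * S + q2 * (S ^+ 2 + k%:R * (e2 - m ^+ 2))
                + (q1 + 2 * q2 * S) * g a + q2 * g a ^+ 2)%:E)).
  by congr Q; apply: funext => a; rewrite IH ?(ltnW kN) // tail_sum_upd // /S; congr EFin; ring.
by rewrite hQ -natr1 /S; congr EFin; ring.
Qed.

Lemma intN_sq_mean Q g m e2 N : (0 < N)%N -> quadratic_moments Q g m e2 ->
  forall c0 lam b a x,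
  intN Q N (fun x => (c0 + lam * (b * (N%:R^-1 * tail_sum g N 0 x) + a) ^+ 2)%:E) x =
  (c0 + lam * (b * m + a) ^+ 2 + lam * b ^+ 2 * (e2 - m ^+ 2) / N%:R)%:E.
Proof.
move=> N0 hQ c0 lam b a x; have NR : N%:R != 0 :> R by rewrite pnatr_eq0 -lt0n.
transitivity (intN Q N (fun x => ((c0 + lam * a ^+ 2) + (2 * lam * a * b / N%:R) * tail_sum g N 0 x
                 + (lam * b ^+ 2 / N%:R ^+ 2) * tail_sum g N 0 x ^+ 2)%:E) x).
  by congr intN; apply: funext => y; congr EFin; field.
by rewrite (intN_quadratic hQ) // tail_sum_id add0r; congr EFin; field.
Qed.

Local Open Scope ereal_scope.

Definition ge0_preserving Q := forall F, (forall a, 0 <= F a) -> 0 <= Q F.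

Definition ge0_monotone Q := forall F1 F2,
  (forall a, 0 <= F1 a) -> (forall a, F1 a <= F2 a) -> Q F1 <= Q F2.

Lemma intN_ge0 Q : ge0_preserving Q ->
  forall k F x, (forall y, 0 <= F y) -> 0 <= intN Q k F x.
Proof.
move=> Q0; elim=> [|k IH] F x F0 /=; first exact: F0.
by apply: Q0 => a; apply: IH.
Qed.

Lemma le_intN Q : ge0_monotone Q -> ge0_preserving Q ->
  forall k F1 F2 x, (forall y, 0 <= F1 y) -> (forall y, F1 y <= F2 y) ->
  intN Q k F1 x <= intN Q k F2 x.
Proof.
move=> Qle Q0; elim=> [|k IH] F1 F2 x F0 F12 /=; first exact: F12.
by apply: Qle => a; [apply: intN_ge0 | apply: IH].
Qed.

End iterated_integral.

Section integral_facts.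
Context d (T : measurableType d) (R : realType).
Implicit Types (mu : {measure set T -> \bar R}) (f : T -> R).

Definition nonneg_bounded f (B : R) :=
  measurable_fun setT f /\ forall x, 0 <= f x <= B.

Definition mean mu f : R := fine (\int[mu]_x (f x)%:E).

Lemma nonneg_bounded_sq f B : nonneg_bounded f B ->
  nonneg_bounded (fun x => f x ^+ 2) (B ^+ 2).
Proof.
case=> mf hf; split; first by under eq_fun do rewrite expr2; exact: measurable_funM.
move=> x; case/andP: (hf x) => f0 fB; rewrite sqr_ge0 /=.
by rewrite ler_pXn2r // ?nnegrE // (le_trans f0 fB).
Qed.

Lemma bounded_fun_le f B : (forall x, `|f x| <= B) -> bounded_fun f.
Proof.
move=> fB; exists B; split; first exact: num_real.
by move=> B' BB' x _ /=; exact: le_trans (fB x) (ltW BB').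
Qed.

Local Open Scope ereal_scope.

Lemma le_integral_ge0 mu (F1 F2 : T -> \bar R) :
  (forall x, 0 <= F1 x) -> (forall x, F1 x <= F2 x) ->
  \int[mu]_x F1 x <= \int[mu]_x F2 x.
Proof.
move=> F0 F12; have F20 x : 0 <= F2 x by exact: le_trans (F0 x) (F12 x).
rewrite !ge0_integralTE //; apply: ereal_sup_le => _ [h /= hF1 <-].
by exists h => //= x; exact: le_trans (hF1 x) (F12 x).
Qed.

Section probability_measure.
Variable mu : {measure set T -> \bar R}.
Hypothesis mu1 : mu setT = 1.

Lemma bounded_integrable f (B : R) : measurable_fun setT f ->
  (forall x, (`|f x| <= B)%R) -> mu.-integrable setT (EFin \o f).
Proof.
move=> mf fB; apply: measurable_bounded_integrable => //; first by rewrite mu1 ltry.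
exact: bounded_fun_le fB.
Qed.

Lemma nonneg_bounded_integrable f B : nonneg_bounded f B ->
  mu.-integrable setT (EFin \o f).
Proof.
case=> mf hf; apply: (bounded_integrable (B := B)) => // x.
by case/andP: (hf x) => f0 fB; rewrite ger0_norm.
Qed.

Lemma integral_mean f B : nonneg_bounded f B -> \int[mu]_x (f x)%:E = (mean mu f)%:E.
Proof.
by move=> hf; rewrite /mean fineK //; apply/integrable_fin_num/(nonneg_bounded_integrable hf).
Qed.

Lemma mean_bounded f B : nonneg_bounded f B -> (0 <= mean mu f <= B)%R.
Proof.
move=> hf; have [_ fB] := hf; apply/andP; split.
  by apply: fine_ge0; apply: integral_ge0 => x _; rewrite lee_fin; case/andP: (fB x).
rewrite -lee_fin -(integral_mean hf).
rewrite (_ : B%:E = \int[mu]_x B%:E); last by rewrite integral_cst // mu1 mule1.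
by apply: le_integral_ge0 => x; rewrite lee_fin; case/andP: (fB x).
Qed.

Lemma integral_quadratic f B : nonneg_bounded f B ->
  quadratic_moments (fun F => \int[mu]_x F x) f (mean mu f) (mean mu (fun x => (f x ^+ 2)%R)).
Proof.
move=> hf u0 u1 u2; have hf2 := nonneg_bounded_sq hf.
have if1 := nonneg_bounded_integrable hf; have if2 := nonneg_bounded_integrable hf2.
have ic : mu.-integrable setT (fun=> u0%:E).
  by apply: (bounded_integrable (f := fun=> u0)) => //; exact: measurable_cst.
under eq_integral do rewrite !EFinD !EFinM.
rewrite integralD //; last exact: integrableZl.
  rewrite integralD //; last exact: integrableZl.
  by rewrite integral_cst // mu1 mule1 !integralZl // (integral_mean hf) (integral_mean hf2).
by apply: integrableD => //; exact: integrableZl.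
Qed.

End probability_measure.
End integral_facts.

Section particle_system.
Local Open Scope ereal_scope.
Variables (R : realType) (d : nat) (G : nat -> d.-tuple R -> R)
  (M : nat -> R.-pker (Vd R d) ~> (Vd R d)) (eta0 : probability (Vd R d) R) (N : nat).
Implicit Types (h : nat -> nat -> Vd R d) (F : (nat -> nat -> Vd R d) -> \bar R).

Definition step_integral p h F :=
  intN (PhiInt G M p.+1 (emp N (h p))) N (fun x => F (upd h p.+1 x)) (fun=> ptV R d).

Lemma runSr k p h F :
  run G M N k.+1 p h F = run G M N k p h (fun h' => step_integral (p + k) h' F).
Proof.
elim: k p h => [|k IH] p h; first by rewrite addn0.
transitivity (intN (PhiInt G M p.+1 (emp N (h p))) N
  (fun x => run G M N k.+1 p.+1 (upd h p.+1 x) F) (fun=> ptV R d)); first by [].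
by congr intN; apply: funext => x; rewrite IH addSnnS.
Qed.

Lemma EpartSr m F :
  Epart eta0 G M N m.+1 F = Epart eta0 G M N m (fun h => step_integral m h F).
Proof. by rewrite /Epart; congr intN; apply: funext => x0; rewrite runSr add0n. Qed.

Hypothesis Phi_ge0 : forall n y, ge0_preserving (PhiInt G M n.+1 (emp N y)).
Hypothesis Phi_monotone : forall n y, ge0_monotone (PhiInt G M n.+1 (emp N y)).

Lemma run_ge0 k p h F : (forall h', 0 <= F h') -> 0 <= run G M N k p h F.
Proof.
elim: k p h F => [|k IH] p h F F0 /=; first exact: F0.
by apply: intN_ge0 => // x; exact: IH.
Qed.

Lemma le_run k p h F1 F2 : (forall h', 0 <= F1 h') -> (forall h', F1 h' <= F2 h') ->
  run G M N k p h F1 <= run G M N k p h F2.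
Proof.
elim: k p h F1 F2 => [|k IH] p h F1 F2 F0 F12 /=; first exact: F12.
by apply: le_intN => // x; [exact: run_ge0 | exact: IH].
Qed.

Lemma le_Epart m F1 F2 : (forall h, 0 <= F1 h) -> (forall h, F1 h <= F2 h) ->
  Epart eta0 G M N m F1 <= Epart eta0 G M N m F2.
Proof.
move=> F0 F12; apply: le_intN => [f1 f2 f0 f12|f f0|x|x].
- exact: le_integral_ge0.
- exact: integral_ge0.
- exact: run_ge0.
- exact: le_run.
Qed.

End particle_system.

Section empirical_measure.
Variables (R : realType) (d : nat) (N : nat).
Implicit Types (y : nat -> Vd R d) (g : Vd R d -> R).

Definition empirical_mean y g : R := N%:R^-1 * \sum_(i < N) g (y i).

Lemma ge0_integral_emp y (F : Vd R d -> \bar R) : measurable_fun setT F ->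
  (forall v, 0 <= F v)%E ->
  (\int[emp N y]_v F v = (N%:R^-1)%:E * \sum_(i < N) F (y i))%E.
Proof.
move=> mF F0; rewrite /emp ge0_integral_mscale //= ge0_integral_measure_sum //.
by congr (_ * _)%E; apply: eq_bigr => i _; rewrite integral_dirac // diracE in_setT mul1e.
Qed.

Lemma integral_emp y g : measurable_fun setT g ->
  (\int[emp N y]_v (g v)%:E = (empirical_mean y g)%:E)%E.
Proof.
move=> mg; have mpos : measurable_fun setT (fun v => (Num.max (g v) 0)%:E).
  by apply/measurable_EFinP; apply: measurable_maxr => //; exact: measurable_cst.
have mneg : measurable_fun setT (fun v => (Num.max (- g v) 0)%:E).
  apply/measurable_EFinP; apply: measurable_maxr; last exact: measurable_cst.
  exact: measurable_funN.
rewrite integralE.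
rewrite (eq_integral (fun v => (Num.max (g v) 0)%:E)); last first.
  by move=> v _; rewrite funeposE EFin_max.
rewrite [X in (_ - X)%E](eq_integral (fun v => (Num.max (- g v) 0)%:E)); last first.
  by move=> v _; rewrite funenegE EFin_max.
rewrite !ge0_integral_emp // ?sumEFin -?EFinM -?EFinB; first last.
- by move=> v; rewrite lee_fin le_max lexx orbT.
- by move=> v; rewrite lee_fin le_max lexx orbT.
congr EFin; rewrite -mulrBr -sumrB; congr (_ * _); apply: eq_bigr => i _.
by rewrite !maxEle; case: (lerP (g (y i)) 0) => h1; case: (lerP (- g (y i)) 0) => h2; lra.
Qed.

Lemma muR_emp y g : measurable_fun setT g -> muR (emp N y) g = empirical_mean y g.
Proof. by move=> mg; rewrite /muR integral_emp. Qed.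

Lemma empirical_mean_ge0 y g : (forall v, 0 <= g v) -> 0 <= empirical_mean y g.
Proof. by move=> g0; rewrite mulr_ge0 ?invr_ge0 // sumr_ge0. Qed.

Lemma empirical_mean_gt0 y g : (0 < N)%N -> (forall v, 0 < g v) -> 0 < empirical_mean y g.
Proof.
rewrite /empirical_mean; case: N => [//|n] _ g0; rewrite mulr_gt0 ?invr_gt0 ?ltr0n // big_ord_recl.
by rewrite ltr_wpDr ?g0 // sumr_ge0 // => i _; exact: ltW.
Qed.

Lemma empirical_mean_le y g B : (0 < N)%N -> (forall i, g (y i) <= B) ->
  empirical_mean y g <= B.
Proof.
move=> N0 gB; rewrite /empirical_mean ler_pdivrMl ?ltr0n // mulr_natl.
by rewrite -[in X in _ <= X](card_ord N) -sumr_const ler_sum.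
Qed.

Lemma ler_empirical_mean y g1 g2 :
  (forall v, g1 v <= g2 v) -> empirical_mean y g1 <= empirical_mean y g2.
Proof. by move=> g12; rewrite ler_wpM2l ?invr_ge0 // ler_sum. Qed.

Lemma empirical_meanB y g1 g2 :
  empirical_mean y (fun v => g1 v - g2 v) = empirical_mean y g1 - empirical_mean y g2.
Proof. by rewrite /empirical_mean sumrB mulrBr. Qed.

Lemma empirical_meanD y g1 g2 :
  empirical_mean y (fun v => g1 v + g2 v) = empirical_mean y g1 + empirical_mean y g2.
Proof. by rewrite /empirical_mean big_split mulrDr. Qed.

Lemma empirical_meanMr y g a :
  empirical_mean y (fun v => g v * a) = empirical_mean y g * a.
Proof. by rewrite /empirical_mean -mulr_suml mulrA. Qed.

Lemma empirical_mean_eq0 y g : (0 < N)%N -> (forall v, 0 <= g v) ->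
  empirical_mean y g = 0 -> forall i : 'I_N, g (y i) = 0.
Proof.
move=> N0 g0 /eqP; rewrite mulf_eq0 invr_eq0 pnatr_eq0 gtn_eqF //= => /eqP s0 i.
by apply: (psumr_eq0P _ s0) => // k _.
Qed.

Lemma integral_emp_prod y g1 g2 :
  measurable_fun setT g1 -> measurable_fun setT g2 ->
  (\int[emp N y]_v \int[emp N y]_w (g1 v * g2 w)%:E
    = (empirical_mean y g1 * empirical_mean y g2)%:E)%E.
Proof.
move=> mg1 mg2; have mc (a : R) : measurable_fun [set: Vd R d] (fun=> a).
  exact: measurable_cst.
rewrite (eq_integral (fun v => (g1 v * empirical_mean y g2)%:E)); last first.
  move=> v _; rewrite integral_emp; last exact: measurable_funM.
  by congr (_%:E); rewrite /empirical_mean -mulr_sumr mulrCA.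
rewrite integral_emp; last exact: measurable_funM.
by congr (_%:E); rewrite /empirical_mean -mulr_suml mulrA.
Qed.

End empirical_measure.

Section coupled_update.
Variables (R : realType) (d : nat) (G : nat -> d.-tuple R -> R)
  (M : nat -> R.-pker (Vd R d) ~> (Vd R d))
  (Mj : nat -> nat -> R.-pker (Ud R d) ~> (Ud R d)).
Hypothesis hGpos : forall p u, 0 < G p u.
Hypothesis hGmeas : forall p, measurable_fun [set: d.-tuple R] (G p).
Variables (N : nat) (y : nat -> Vd R d).
Hypothesis N0 : (0 < N)%N.

Local Notation mu := (emp N y).

Lemma measurable_compj j : measurable_fun [set: Vd R d] (compj j).
Proof. by rewrite /compj; case: (j == 1)%N; [exact: measurable_fst | exact: measurable_snd]. Qed.

Lemma measurable_compjT (f : d.-tuple R -> R) j :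
  measurable_fun setT f -> measurable_fun setT (fun v => f (compj j v)).
Proof. by move=> mf; exact: measurableT_comp mf (measurable_compj j). Qed.

Lemma Gj_emp m j u : Gj G m j mu u = G m u / empirical_mean N y (fun v => G m (compj j v)).
Proof. by rewrite /Gj muR_emp //; exact: measurable_compjT. Qed.

Lemma Gj_gt0 m j u : 0 < Gj G m j mu u.
Proof. by rewrite Gj_emp divr_gt0 // empirical_mean_gt0. Qed.

Lemma measurable_Gj m j : measurable_fun setT (fun v => Gj G m j mu (compj j v)).
Proof.
apply: (measurable_funM (f := fun v => G m (compj j v))); last exact: measurable_cst.
exact: measurable_compjT.
Qed.

Lemma measurable_Gbar m : measurable_fun setT (Gbar G m mu).
Proof. exact: measurable_minr (measurable_Gj m 1) (measurable_Gj m 2). Qed.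

Lemma Gbar_ge0 m v : 0 <= Gbar G m mu v.
Proof. by rewrite /Gbar le_min !ltW ?Gj_gt0. Qed.

Lemma Gbar_le_Gj m j v : j = 1%N \/ j = 2%N -> Gbar G m mu v <= Gj G m j mu (compj j v).
Proof. by case=> ->; rewrite /Gbar ge_min lexx ?orbT. Qed.

Lemma empirical_mean_Gj m j : empirical_mean N y (fun v => Gj G m j mu (compj j v)) = 1.
Proof.
have /lt0r_neq0 nz :=
  @empirical_mean_gt0 _ _ _ y (fun v => G m (compj j v)) N0 (fun v => hGpos _ _).
by rewrite /empirical_mean; under eq_bigr do rewrite Gj_emp; rewrite -mulr_suml mulrA divff.
Qed.

Definition residual m j v := Gj G m j mu (compj j v) - Gbar G m mu v.

Lemma residual_ge0 m j v : j = 1%N \/ j = 2%N -> 0 <= residual m j v.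
Proof. by move=> hj; rewrite subr_ge0 Gbar_le_Gj. Qed.

Lemma measurable_residual m j : measurable_fun setT (residual m j).
Proof. exact: measurable_funB (measurable_Gj m j) (measurable_Gbar m). Qed.

Lemma empirical_mean_residual m j :
  empirical_mean N y (residual m j) = 1 - muR mu (Gbar G m mu).
Proof.
rewrite muR_emp; last exact: measurable_Gbar.
by rewrite (empirical_meanB N y (fun v => Gj G m j mu (compj j v))) empirical_mean_Gj.
Qed.

Section residual_mass.
Variable m : nat.
Local Notation s := (muR mu (Gbar G m mu)).

Lemma residual_mass_ge0 : 0 <= 1 - s.
Proof.
by rewrite -(empirical_mean_residual m 1) empirical_mean_ge0 // => v; apply: residual_ge0; left.
Qed.

Lemma residual_ratio_ge0 j v : j = 1%N \/ j = 2%N -> 0 <= residual m j v / (1 - s).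
Proof. by move=> hj; rewrite divr_ge0 ?residual_ge0 ?residual_mass_ge0. Qed.

Lemma coupling_residual j (L : d.-tuple R -> R) : j = 1%N \/ j = 2%N ->
  measurable_fun setT L ->
  ((if s == 1%R then 0 else (1 - s)%:E * \int[mu]_v \int[mu]_w
      ((residual m 1 v / (1 - s) * (residual m 2 w / (1 - s)))%:E * (L (compj j (v.1, w.2)))%:E))
  = (empirical_mean N y (fun v => residual m j v * L (compj j v)))%:E)%E.
Proof.
move=> hj mL; have [mr1 mr2] := (measurable_residual m 1, measurable_residual m 2).
have [e1 e2] := (empirical_mean_residual m 1, empirical_mean_residual m 2).
have mc (a : R) : measurable_fun [set: Vd R d] (fun=> a) by exact: measurable_cst.
case: eqP => [s1 | /eqP s1].
  rewrite /empirical_mean big1 ?mulr0 // => i _.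
  suff -> : residual m j (y i) = 0 by rewrite mul0r.
  apply: empirical_mean_eq0 => // [v|]; first exact: residual_ge0.
  by rewrite empirical_mean_residual s1 subrr.
have s1' : 1 - s != 0 by rewrite subr_eq0 eq_sym.
case: hj => ->.
- rewrite (eq_integral (fun v => \int[mu]_w
      ((residual m 1 v * L v.1 / (1 - s)) * (residual m 2 w / (1 - s)))%:E)%E); last first.
    by move=> v _; apply: eq_integral => w _; rewrite -EFinM; congr (_%:E); ring.
  have mg1 : measurable_fun setT (fun v => residual m 1 v * L v.1 / (1 - s)).
    by apply: measurable_funM (mc _); exact: measurable_funM mr1 (measurable_compjT 1 mL).
  have mg2 : measurable_fun setT (fun w => residual m 2 w / (1 - s)).
    exact: measurable_funM mr2 (mc _).
  rewrite integral_emp_prod //.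
  rewrite -EFinM (empirical_meanMr N y (fun v => residual m 1 v * L v.1)).
  by rewrite (empirical_meanMr N y (residual m 2)) e2; congr (_%:E); field.
- rewrite (eq_integral (fun v => \int[mu]_w
      ((residual m 1 v / (1 - s)) * (residual m 2 w * L w.2 / (1 - s)))%:E)%E); last first.
    by move=> v _; apply: eq_integral => w _; rewrite -EFinM; congr (_%:E); ring.
  have mg1 : measurable_fun setT (fun v => residual m 1 v / (1 - s)).
    exact: measurable_funM mr1 (mc _).
  have mg2 : measurable_fun setT (fun w => residual m 2 w * L w.2 / (1 - s)).
    by apply: measurable_funM (mc _); exact: measurable_funM mr2 (measurable_compjT 2 mL).
  rewrite integral_emp_prod //.
  rewrite -EFinM (empirical_meanMr N y (fun v => residual m 2 v * L v.2)).
  by rewrite (empirical_meanMr N y (residual m 1)) e1; congr (_%:E); field.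
Qed.

End residual_mass.

Lemma PhiIntE n F : PhiInt G M n mu F =
  (\int[mu]_v ((Gbar G n.-1 mu v)%:E * \int[M n v]_z F z)
   + (if muR mu (Gbar G n.-1 mu) == 1%R then 0 else
      (1 - muR mu (Gbar G n.-1 mu))%:E * \int[mu]_v \int[mu]_w
        ((residual n.-1 1 v / (1 - muR mu (Gbar G n.-1 mu))
          * (residual n.-1 2 w / (1 - muR mu (Gbar G n.-1 mu))))%:E
         * \int[M n (v.1, w.2)]_z F z)))%E.
Proof.
have mu_res j : muR mu (residual n.-1 j) = 1 - muR mu (Gbar G n.-1 mu).
  by rewrite muR_emp ?empirical_mean_residual //; exact: measurable_residual.
have r1 : muR mu (fun v => Gj G n.-1 1 mu v.1 - Gbar G n.-1 mu v)
  = 1 - muR mu (Gbar G n.-1 mu) := mu_res 1%N.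
have r2 : muR mu (fun v => Gj G n.-1 2 mu v.2 - Gbar G n.-1 mu v)
  = 1 - muR mu (Gbar G n.-1 mu) := mu_res 2%N.
by rewrite /PhiInt r1 r2.
Qed.

Hypothesis hmarg : forall n : nat, (1 <= n)%N ->
  forall j : nat, (j = 1%N \/ j = 2%N) ->
  forall (v : Vd R d) (phi : d.-tuple R -> R),
    measurable_fun [set: d.-tuple R] phi -> bounded_fun phi ->
    (\int[M n v]_y (phi (compj j y))%:E = \int[Mj j n (compj j v)]_u (phi u)%:E)%E.

(* The coupling preserves marginals: the j-th marginal of bar Phi_n(eta^N) is
   the Feynman-Kac update of the j-th marginal of eta^N. *)
Lemma PhiInt_compj n j (H LH : d.-tuple R -> R) : (1 <= n)%N -> j = 1%N \/ j = 2%N ->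
  measurable_fun setT H -> bounded_fun H -> measurable_fun setT LH ->
  (forall u, \int[Mj j n u]_z (H z)%:E = (LH u)%:E)%E ->
  PhiInt G M n mu (fun v => (H (compj j v))%:E)
  = (empirical_mean N y (fun v => Gj G n.-1 j mu (compj j v) * LH (compj j v)))%:E.
Proof.
move=> n1 hj mH bH mLH hLH.
have hK v : (\int[M n v]_z (H (compj j z))%:E = (LH (compj j v))%:E)%E.
  by rewrite hmarg // hLH.
have mLHj := measurable_compjT j mLH.
rewrite PhiIntE; under eq_integral => v _ do rewrite hK -EFinM.
rewrite integral_emp; last exact: measurable_funM (measurable_Gbar _) mLHj.
under eq_integral => v _ do under eq_integral => w _ do rewrite hK.
rewrite coupling_residual // -EFinD; congr (_%:E).
rewrite -empirical_meanD; congr (empirical_mean N y _); apply: funext => v.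
by rewrite /residual; ring.
Qed.

Lemma PhiInt_ge0 n : ge0_preserving (PhiInt G M n mu).
Proof.
move=> F F0; rewrite PhiIntE; apply: adde_ge0.
  apply: integral_ge0 => v _; apply: mule_ge0; first by rewrite lee_fin Gbar_ge0.
  exact: integral_ge0.
case: ifP => _ //; apply: mule_ge0; first by rewrite lee_fin residual_mass_ge0.
apply: integral_ge0 => v _; apply: integral_ge0 => w _.
apply: mule_ge0; last exact: integral_ge0.
by rewrite lee_fin; apply: mulr_ge0; apply: residual_ratio_ge0; [left | right].
Qed.

Lemma le_PhiInt n : ge0_monotone (PhiInt G M n mu).
Proof.
move=> F1 F2 F0 F12; rewrite !PhiIntE.
have le_kernel v : (\int[M n v]_z F1 z <= \int[M n v]_z F2 z)%E.
  exact: le_integral_ge0.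
have w0 v w : (0 <= (residual n.-1 1 v / (1 - muR mu (Gbar G n.-1 mu))
                   * (residual n.-1 2 w / (1 - muR mu (Gbar G n.-1 mu))))%:E)%E.
  by rewrite lee_fin; apply: mulr_ge0; apply: residual_ratio_ge0; [left | right].
have Gb0 v : (0 <= (Gbar G n.-1 mu v)%:E)%E by rewrite lee_fin Gbar_ge0.
apply: (@leeD R).
  apply: le_integral_ge0 => v.
    by apply: mule_ge0; [exact: Gb0 | apply: integral_ge0 => z _; exact: F0].
  exact: lee_wpmul2l (Gb0 v) _ _ (le_kernel v).
case: (muR mu (Gbar G n.-1 mu) == 1%R); first exact: lexx.
apply: (@lee_wpmul2l R); first by rewrite lee_fin residual_mass_ge0.
have integrand0 v w : (0 <= (residual n.-1 1 v / (1 - muR mu (Gbar G n.-1 mu))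
   * (residual n.-1 2 w / (1 - muR mu (Gbar G n.-1 mu))))%:E * \int[M n (v.1, w.2)]_z F1 z)%E.
  by apply: mule_ge0; [exact: w0 | apply: integral_ge0 => z _; exact: F0].
apply: le_integral_ge0 => v.
  by apply: integral_ge0 => w _; exact: integrand0.
apply: le_integral_ge0 => w; first exact: integrand0.
by apply: (@lee_wpmul2l R); [exact: w0 | exact: le_kernel].
Qed.

End coupled_update.

Section feynman_kac.
Variables (R : realType) (d : nat) (G : nat -> d.-tuple R -> R)
  (M : nat -> R.-pker (Vd R d) ~> (Vd R d))
  (Mj : nat -> nat -> R.-pker (Ud R d) ~> (Ud R d))
  (eta0 : probability (Vd R d) R) (j : nat) (c : R).
Hypothesis hGpos : forall p u, 0 < G p u.
Hypothesis hGmeas : forall p, measurable_fun [set: d.-tuple R] (G p).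
Hypothesis hGc : forall p u, G p u <= c.
Hypothesis hj : j = 1%N \/ j = 2%N.
Implicit Types (f : d.-tuple R -> R) (B : R).

Lemma G_nonneg_bounded p : nonneg_bounded (G p) c.
Proof. by split=> // u; rewrite ltW ?hGc. Qed.

Definition kernel_mean q f u := mean (Mj j q u) f.

Definition fk_op q f u := G q.-1 u * kernel_mean q f u.

Fixpoint fk_iter k p f : d.-tuple R -> R :=
  if k is k'.+1 then fk_op p.+1 (fk_iter k' p.+1 f) else f.

Definition gamma_fun p f := mean eta0 (fun v => fk_iter p 0 f (compj j v)).

Lemma nonneg_bounded_compj f B : nonneg_bounded f B ->
  nonneg_bounded (fun v => f (compj j v)) B.
Proof. by case=> mf f0B; split=> [|v]; [exact: measurable_compjT | exact: f0B]. Qed.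

Lemma kernel_mean_nonneg_bounded q f B : nonneg_bounded f B ->
  nonneg_bounded (kernel_mean q f) B.
Proof.
move=> hf; have [mf f0B] := hf; split=> [|u]; last by apply: mean_bounded hf; exact: prob_kernel.
apply: (measurableT_comp (fine_measurable measurableT)).
apply: (measurable_fun_integral_kernel (measurable_kernel (Mj j q))).
  by move=> z; rewrite lee_fin; case/andP: (f0B z).
exact/measurable_EFinP.
Qed.

Lemma integral_kernel_mean q f B u : nonneg_bounded f B ->
  (\int[Mj j q u]_x (f x)%:E = (kernel_mean q f u)%:E)%E.
Proof. by apply: integral_mean; exact: prob_kernel. Qed.

Lemma fk_op_nonneg_bounded q f B : nonneg_bounded f B ->
  nonneg_bounded (fk_op q f) (c * B).
Proof.
move=> hf; have [mk k0B] := kernel_mean_nonneg_bounded q hf.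
split; first exact: measurable_funM.
move=> u; have [G0 Gc] := (ltW (hGpos q.-1 u), hGc q.-1 u).
by case/andP: (k0B u) => k0 kB; rewrite mulr_ge0 //= ler_pM.
Qed.

Lemma fk_iter_nonneg_bounded k p f B : nonneg_bounded f B ->
  nonneg_bounded (fk_iter k p f) (c ^+ k * B).
Proof.
move=> hf; elim: k p => [|k IH] p; first by rewrite expr0 mul1r.
by rewrite exprS -mulrA; exact: fk_op_nonneg_bounded.
Qed.

Lemma fk_iterSr k p f : fk_iter k.+1 p f = fk_iter k p (fk_op (p + k).+1 f).
Proof.
elim: k p => [|k IH] p; first by rewrite addn0.
by transitivity (fk_op p.+1 (fk_iter k.+1 p.+1 f)); rewrite // IH addSnnS.
Qed.

Lemma gamma_funSr p f : gamma_fun p.+1 f = gamma_fun p (fk_op p.+1 f).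
Proof. by rewrite /gamma_fun fk_iterSr add0n. Qed.

Lemma fk_fk_iter k p u : fk G Mj j k.+1 p u = (fk_iter k p (G (p + k)) u)%:E.
Proof.
elim: k p u => [|k IH] p u.
  by rewrite /= addn0 integral_cst // prob_kernel !mule1.
transitivity ((G p u)%:E * \int[Mj j p.+1 u]_x fk G Mj j k.+1 p.+1 x)%E; first by [].
under eq_integral do rewrite IH.
rewrite (integral_kernel_mean _ _ (fk_iter_nonneg_bounded _ _ (G_nonneg_bounded _))).
by rewrite -EFinM addSnnS.
Qed.

Lemma gamma_gamma_fun n : (1 <= n)%N -> gamma eta0 G Mj n j = gamma_fun n.-1 (G n.-1).
Proof.
case: n => [//|n] _; rewrite /gamma /gamma_fun /mean.
congr fine; apply: eq_integral => v _.
by rewrite fk_fk_iter.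
Qed.

Hypothesis hmarg : forall n : nat, (1 <= n)%N ->
  forall j : nat, (j = 1%N \/ j = 2%N) ->
  forall (v : Vd R d) (phi : d.-tuple R -> R),
    measurable_fun [set: d.-tuple R] phi -> bounded_fun phi ->
    (\int[M n v]_y (phi (compj j y))%:E = \int[Mj j n (compj j v)]_u (phi u)%:E)%E.
Variable N : nat.
Hypothesis N0 : (0 < N)%N.
Implicit Types (h : nat -> nat -> Vd R d) (y : nat -> Vd R d).

Definition etaN p f h := empirical_mean N (h p) (fun v => f (compj j v)).

Definition massN p h := \prod_(q < p) etaN q (G q) h.

Definition gammaN_fun p f h := massN p h * etaN p f h.

(* The mean of f under the j-th marginal of bar Phi_{p+1}(eta^N_p). *)
Definition updated_mean p y f :=
  empirical_mean N y (fun v => Gj G p j (emp N y) (compj j v) * kernel_mean p.+1 f (compj j v)).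

Lemma massN_bounded p h : 0 <= massN p h <= c ^+ p.
Proof.
elim: p => [|p /andP[m0 mc]]; first by rewrite /massN big_ord0 expr0 lexx ler01.
have e0 : 0 <= etaN p (G p) h by apply: empirical_mean_ge0 => v; exact: ltW.
have ec : etaN p (G p) h <= c by exact: empirical_mean_le.
by rewrite /massN big_ord_recr /= mulr_ge0 //= exprSr ler_pM.
Qed.

Lemma massN_upd p h x : massN p (upd h p x) = massN p h.
Proof. by apply: eq_bigr => q _; rewrite /etaN /upd ltn_eqF. Qed.

Lemma etaN_upd p f h x :
  etaN p f (upd h p x) = N%:R^-1 * tail_sum (fun v => f (compj j v)) N 0 x.
Proof. by rewrite /etaN /upd eqxx /tail_sum big_mkord. Qed.

Lemma gammaN_massN n h : gammaN G N n j h = massN n h.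
Proof. by apply: eq_bigr => q _; rewrite muR_emp //; exact: measurable_compjT. Qed.

Lemma massN_updated_mean p h f :
  massN p.+1 h * updated_mean p (h p) f = gammaN_fun p (fk_op p.+1 f) h.
Proof.
rewrite /massN big_ord_recr /= -/(massN p h) /gammaN_fun -mulrA; congr (_ * _).
have e0 : etaN p (G p) h != 0 by apply/lt0r_neq0/empirical_mean_gt0.
rewrite /updated_mean (_ : (fun v => _) = fun v => fk_op p.+1 f (compj j v) / etaN p (G p) h).
  by rewrite empirical_meanMr mulrCA mulfV ?mulr1.
by apply: funext => v; rewrite Gj_emp // mulrAC.
Qed.

Lemma updated_mean_le p y f B : nonneg_bounded f B -> updated_mean p y f <= B.
Proof.
move=> hf; have [_ k0B] := kernel_mean_nonneg_bounded p.+1 hf.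
rewrite -[X in _ <= X]mul1r -(empirical_mean_Gj hGpos hGmeas y N0 p j) -empirical_meanMr.
apply: ler_empirical_mean => v; apply: ler_wpM2l; first exact/ltW/Gj_gt0.
by case/andP: (k0B (compj j v)).
Qed.

Lemma PhiInt_quadratic_moments p y f B : nonneg_bounded f B ->
  quadratic_moments (PhiInt G M p.+1 (emp N y)) (fun v => f (compj j v))
    (updated_mean p y f) (updated_mean p y (fun u => f u ^+ 2)).
Proof.
move=> hf u0 u1 u2; have hf2 := nonneg_bounded_sq hf.
have [[mf f0B] [mf2 _]] := (hf, hf2).
have [mk _] := kernel_mean_nonneg_bounded p.+1 hf.
have [mk2 _] := kernel_mean_nonneg_bounded p.+1 hf2.
have mq (g1 g2 : d.-tuple R -> R) : measurable_fun setT g1 -> measurable_fun setT g2 ->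
    measurable_fun setT (fun u => u0 + u1 * g1 u + u2 * g2 u).
  move=> m1 m2; have mc (a : R) : measurable_fun [set: d.-tuple R] (fun=> a).
    exact: measurable_cst.
  apply: measurable_funD; last exact: measurable_funM (mc _) m2.
  by apply: measurable_funD; [exact: mc | exact: measurable_funM (mc _) m1].
pose H u := u0 + u1 * f u + u2 * f u ^+ 2.
pose LH u := u0 + u1 * kernel_mean p.+1 f u + u2 * kernel_mean p.+1 (fun u => f u ^+ 2) u.
have bH : bounded_fun H.
  apply: (bounded_fun_le (B := `|u0| + `|u1| * B + `|u2| * B ^+ 2)) => u.
  have [f0 fB] := andP (f0B u); have f2B : f u ^+ 2 <= B ^+ 2.
    by rewrite ler_pXn2r // ?nnegrE // (le_trans f0 fB).
  have h1 : `|u1 * f u| <= `|u1| * B.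
    by rewrite normrM (ger0_norm f0); apply: ler_wpM2l.
  have h2 : `|u2 * f u ^+ 2| <= `|u2| * B ^+ 2.
    by rewrite normrM (ger0_norm (sqr_ge0 _)); apply: ler_wpM2l.
  have := ler_normD u0 (u1 * f u); have := ler_normD (u0 + u1 * f u) (u2 * f u ^+ 2).
  rewrite /H; lra.
rewrite (PhiInt_compj hGpos hGmeas y N0 hmarg (H := H) (LH := LH)) //.
- congr (_%:E); have := empirical_mean_Gj hGpos hGmeas y N0 p j.
  rewrite /updated_mean /LH /empirical_mean /= => sumGj.
  transitivity (u0 * (N%:R^-1 * \sum_(i < N) Gj G p j (emp N y) (compj j (y i)))
    + u1 * (N%:R^-1 * \sum_(i < N) Gj G p j (emp N y) (compj j (y i))
                                     * kernel_mean p.+1 f (compj j (y i)))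
    + u2 * (N%:R^-1 * \sum_(i < N) Gj G p j (emp N y) (compj j (y i))
                                     * kernel_mean p.+1 (fun u => f u ^+ 2) (compj j (y i))));
    last by rewrite sumGj mulr1.
  by rewrite !mulr_sumr -!big_split; apply: eq_bigr => i _ /=; ring.
- exact: mq.
- exact: mq.
- move=> u; rewrite /H (integral_quadratic _ hf) //; exact: prob_kernel.
Qed.

Lemma gammaN_gammaN_fun n h : (1 <= n)%N -> gammaN G N n j h = gammaN_fun n.-1 (G n.-1) h.
Proof. by case: n => [//|n] _; rewrite gammaN_massN /massN big_ord_recr. Qed.

Lemma Epart0_sq_error f B c0 lam : nonneg_bounded f B -> 0 <= lam ->
  (Epart eta0 G M N 0 (fun h => (c0 + lam * (gammaN_fun 0 f h - gamma_fun 0 f) ^+ 2)%:E)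
   <= (c0 + lam * B ^+ 2 / N%:R)%:E)%E.
Proof.
move=> hf lam0; have hfj := nonneg_bounded_compj hf.
have mom := integral_quadratic (probability_setT eta0) hfj.
have gamma0 : mean eta0 (fun v => f (compj j v)) = gamma_fun 0 f by [].
rewrite /Epart /= (_ : (fun x => _) = fun x => (c0 + lam * (1 * (N%:R^-1
    * tail_sum (fun v => f (compj j v)) N 0 x) + - gamma_fun 0 f) ^+ 2)%:E); last first.
  by apply: funext => x; rewrite /gammaN_fun /massN big_ord0 /etaN /tail_sum big_mkord.
rewrite (intN_sq_mean N0 mom) gamma0 lee_fin mul1r subrr expr0n mulr0 addr0 lerD2l.
have [_ eB] := andP (mean_bounded (probability_setT eta0)
                       (nonneg_bounded_compj (nonneg_bounded_sq hf))).
have := @variance_term_le _ lam 1 1 _ (gamma_fun 0 f) B N%:R^-1 lam0.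
by rewrite ler01 lexx invr_ge0 ler0n !expr1n !mulr1; apply.
Qed.

Lemma step_integral_sq_error p h f B c0 lam : nonneg_bounded f B -> 0 <= lam ->
  (step_integral G M N p h
     (fun h' => (c0 + lam * (gammaN_fun p.+1 f h' - gamma_fun p.+1 f) ^+ 2)%:E)
   <= (c0 + lam * (c ^+ p.+1) ^+ 2 * B ^+ 2 / N%:R
       + lam * (gammaN_fun p (fk_op p.+1 f) h - gamma_fun p (fk_op p.+1 f)) ^+ 2)%:E)%E.
Proof.
move=> hf lam0; rewrite /step_integral.
rewrite (_ : (fun x => _) = fun x => (c0 + lam * (massN p.+1 h * (N%:R^-1
    * tail_sum (fun v => f (compj j v)) N 0 x) + - gamma_fun p.+1 f) ^+ 2)%:E); last first.
  by apply: funext => x; rewrite /gammaN_fun massN_upd etaN_upd.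
rewrite (intN_sq_mean N0 (PhiInt_quadratic_moments p (h p) hf)) lee_fin.
rewrite massN_updated_mean gamma_funSr.
have Ninv0 : 0 <= N%:R^-1 :> R by rewrite invr_ge0.
have := variance_term_le (updated_mean p (h p) f) lam0 (massN_bounded p.+1 h)
  (updated_mean_le p (h p) (nonneg_bounded_sq hf)) Ninv0.
lra.
Qed.

Fixpoint error_const p : R :=
  if p is p'.+1 then (c ^+ p'.+1) ^+ 2 + c ^+ 2 * error_const p' else 1.

(* c0 collects the variance contributed by the later time steps. *)
Lemma Epart_sq_error p f B c0 lam : nonneg_bounded f B -> 0 <= c0 -> 0 <= lam ->
  (Epart eta0 G M N p (fun h => (c0 + lam * (gammaN_fun p f h - gamma_fun p f) ^+ 2)%:E)
   <= (c0 + lam * error_const p * B ^+ 2 / N%:R)%:E)%E.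
Proof.
elim: p f B c0 => [|p IH] f B c0 hf c00 lam0.
  by rewrite /= mulr1; exact: Epart0_sq_error.
have Phi0 n y := PhiInt_ge0 M hGpos hGmeas y N0 n.+1.
have lePhi n y := le_PhiInt M hGpos hGmeas y N0 n.+1.
set c0' := c0 + lam * (c ^+ p.+1) ^+ 2 * B ^+ 2 / N%:R.
have c0'0 : 0 <= c0'.
  apply: addr_ge0 => //; apply: divr_ge0 => //.
  by apply: mulr_ge0; [apply: mulr_ge0 => // |]; exact: sqr_ge0.
have step h := step_integral_sq_error p h c0 hf lam0.
rewrite EpartSr; apply: le_trans (le_Epart eta0 Phi0 lePhi p _ step) _.
- move=> h; apply: intN_ge0 => // x; rewrite lee_fin.
  by apply: addr_ge0 => //; apply: mulr_ge0 => //; exact: sqr_ge0.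
- apply: le_trans (IH _ _ _ (fk_op_nonneg_bounded p.+1 hf) c0'0 lam0) _.
  by rewrite lee_fin /c0' /= le_eqVlt; apply/orP; left; apply/eqP; ring.
Qed.

End feynman_kac.

Theorem propositionB2 (R : realType) (d : nat)
  (G : nat -> d.-tuple R -> R)
  (eta0 : probability (Vd R d) R)
  (M : nat -> R.-pker (Vd R d) ~> (Vd R d))
  (Mj : nat -> nat -> R.-pker (Ud R d) ~> (Ud R d))
  (hGpos : forall (p : nat) (u : d.-tuple R), 0 < G p u)
  (hGmeas : forall p : nat, measurable_fun [set: d.-tuple R] (G p))
  (hmarg : forall n : nat, (1 <= n)%N ->
     forall j : nat, (j = 1%N \/ j = 2%N) ->
     forall (v : Vd R d) (phi : d.-tuple R -> R),
       measurable_fun [set: d.-tuple R] phi -> bounded_fun phi ->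
       (\int[M n v]_y (phi (compj j y))%:E = \int[Mj j n (compj j v)]_u (phi u)%:E)%E)
  (A1 : exists c C : R, 1 < c /\ 0 < C /\
     (forall (p : nat) (x : d.-tuple R), c^-1 < G p x < c) /\
     (forall (p : nat) (x x' : d.-tuple R), `|G p x - G p x'| <= C * dist x x'))
  (A2 : forall n : nat, (1 <= n)%N -> exists Cn : R, 0 < Cn /\
     forall (u u' : d.-tuple R) (j : nat), (j = 1%N \/ j = 2%N) ->
     forall phi : d.-tuple R -> R, bounded_fun phi -> lipschitz_fun phi ->
       `|fine (\int[Mj j n u]_y (phi y)%:E) - fine (\int[Mj j n u']_y (phi y)%:E)|
         <= Cn * supnorm phi * dist u u') :
  forall n : nat, (1 <= n)%N ->
  exists Cn : R, forall N : nat, (1 <= N)%N ->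
  forall j : nat, (j = 1%N \/ j = 2%N) ->
  (Epart eta0 G M N n.-1
     (fun h => ((gammaN G N n j h - gamma eta0 G Mj n j) ^+ 2)%:E)
   <= (Cn / N%:R)%:E)%E.
Proof.
move=> n n1; case: A1 => c [_ [_ [_ [hGc _]]]].
have hGle p u : G p u <= c by have /andP[_ /ltW] := hGc p u.
exists (error_const c n.-1 * c ^+ 2) => N N0 j hj.
have := Epart_sq_error eta0 hGpos hGmeas hGle hj hmarg N0 n.-1
  (G_nonneg_bounded hGpos hGmeas hGle n.-1) (lexx 0) ler01.
rewrite add0r mul1r mulrA => bound; apply: le_trans bound.
rewrite le_eqVlt; apply/orP; left; apply/eqP; congr Epart; apply: funext => h.
by rewrite (gamma_gamma_fun Mj eta0 j hGpos hGmeas hGle) // gammaN_gammaN_fun // add0r mul1r.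
Qed.
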